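(* Let $G$ be a convex, twice differentiable real-valued function on the space of symmetric $N\times N$ matrices (in particular on the cone of positive semidefinite matrices), with compact level sets on the positive semidefinite cone. For $M\ge1$ define $H:\mathbb{R}^{N\times M}\to\mathbb{R}$ by $H(U)=G(UU^\top)$. If $H$ has a local minimum at a matrix $U\in\mathbb{R}^{N\times M}$ that is rank-deficient (i.e., $\operatorname{rank}U<M$), then $UU^\top$ is a global minimizer of $G$ over the positive semidefinite $N\times N$ matrices. *)

From Stdlib Require Import Reals.
From mathcomp Require Import all_boot.

Set Implicit Arguments.
Unset Strict Implicit.

Local Open Scope R_scope.

Definition Mat (n m : nat) := 'I_n -> 'I_m -> R.

Definition rsum (n : nat) (f : 'I_n -> R) : R := foldr (fun i acc => f i + acc) 0 (enum 'I_n).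

Definition madd n m (X Y : Mat n m) : Mat n m := fun i j => X i j + Y i j.
Definition mscale n m (a : R) (X : Mat n m) : Mat n m := fun i j => a * X i j.
Definition msub n m (X Y : Mat n m) : Mat n m := fun i j => X i j - Y i j.

(* entrywise l1 norm (all norms are equivalent in finite dimension) *)
Definition mnorm n m (X : Mat n m) : R :=
  rsum (fun i => rsum (fun j => Rabs (X i j))).

Definition gram n m (U : Mat n m) : Mat n n :=
  fun i j => rsum (fun k => U i k * U j k).

Definition symmetric n (X : Mat n n) : Prop := forall i j, X i j = X j i.

Definition psd n (X : Mat n n) : Prop :=
  symmetric X /\
  forall v : 'I_n -> R, 0 <= rsum (fun i => rsum (fun j => v i * X i j * v j)).

Definition convex_on_sym n (G : Mat n n -> R) : Prop :=
  forall X Y, symmetric X -> symmetric Y -> forall t, 0 <= t <= 1 ->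
    G (madd (mscale t X) (mscale (1 - t) Y)) <= t * G X + (1 - t) * G Y.

Definition linear_on_sym n (L : Mat n n -> R) : Prop :=
  forall a b H K, symmetric H -> symmetric K ->
    L (madd (mscale a H) (mscale b K)) = a * L H + b * L K.

Definition bilinear_on_sym n (B : Mat n n -> Mat n n -> R) : Prop :=
  (forall K, symmetric K -> linear_on_sym (fun H => B H K)) /\
  (forall H, symmetric H -> linear_on_sym (fun K => B H K)).

(* G twice (Frechet) differentiable on the space of symmetric matrices:
   DG X is the first derivative at X (a linear form on Sym_n), D2G X the
   second derivative at X (a bilinear form on Sym_n), i.e. the Frechet
   derivative of X |-> DG X w.r.t. the operator norm. *)
Definition twice_differentiable_on_sym n (G : Mat n n -> R) : Prop :=
  exists (DG : Mat n n -> Mat n n -> R) (D2G : Mat n n -> Mat n n -> Mat n n -> R),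
  forall X, symmetric X ->
    linear_on_sym (DG X) /\ bilinear_on_sym (D2G X) /\
    (forall eps, 0 < eps -> exists delta, 0 < delta /\
       forall H, symmetric H -> mnorm H < delta ->
         Rabs (G (madd X H) - G X - DG X H) <= eps * mnorm H) /\
    (forall eps, 0 < eps -> exists delta, 0 < delta /\
       forall H, symmetric H -> mnorm H < delta ->
       forall K, symmetric K ->
         Rabs (DG (madd X H) K - DG X K - D2G X H K) <= eps * mnorm H * mnorm K).

Definition compact_set n m (A : Mat n m -> Prop) : Prop :=
  forall u : nat -> Mat n m, (forall k, A (u k)) ->
    exists phi : nat -> nat, (forall k, (phi k < phi k.+1)%nat) /\
    exists L, A L /\ forall i j, Un_cv (fun k => u (phi k) i j) (L i j).

Definition compact_level_sets_psd n (G : Mat n n -> R) : Prop :=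
  forall c : R, compact_set (fun X => psd X /\ G X <= c).

Definition local_min n m (H : Mat n m -> R) (U : Mat n m) : Prop :=
  exists delta, 0 < delta /\
    forall V, mnorm (msub V U) < delta -> H U <= H V.

(* rank U < m : the m columns of U are linearly dependent *)
Definition rank_deficient n m (U : Mat n m) : Prop :=
  exists z : 'I_m -> R, (exists k, z k <> 0) /\
    forall i, rsum (fun k => U i k * z k) = 0.

Definition global_min_psd n (G : Mat n n -> R) (X : Mat n n) : Prop :=
  psd X /\ forall Y, psd Y -> G X <= G Y.

(* Write X = U U^T and A = DG X for the derivative of G at X.  The proof
   consists of three independent facts.
   - First-order information from the factorisation.  If V t is a curve of
     factors tending to U with gram (V t) = X + phi(t) K, 0 < phi(t) = O(t),
     local minimality of U makes K a "non-descent direction" of G at X, and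
     a non-descent direction K satisfies A K >= 0.  Two curves are used:
     U + t v z^T with U z = 0 (z exists since rank U < M) gives
     A (v v^T) >= 0 for every vector v, and (1 - t) U gives A (-X) >= 0.
   - A linear form that is nonnegative on the rank-one matrices v v^T is
     nonnegative on the whole PSD cone (by repeated Schur complements,
     i.e. a Cholesky-type decomposition into rank-one pieces).
   - For a convex function differentiable at X, A (Y - X) >= 0 implies
     G X <= G Y.
   Hence A (Y - X) = A Y + A (-X) >= 0 for every PSD Y, and X is a global
   minimiser. *)
From Pilot Require Import Defs.
From Stdlib Require Import Reals Lra FunctionalExtensionality.
From mathcomp Require Import all_boot.
From HB Require Import structures.
Local Open Scope R_scope.
Set Implicit Arguments.
Unset Strict Implicit.

Local Notation sym := Defs.symmetric.

Lemma mat_ext n m (X Y : Mat n m) : (forall i j, X i j = Y i j) -> X = Y.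
Proof.
move=> h; apply: functional_extensionality => i.
by apply: functional_extensionality => j; apply: h.
Qed.

HB.instance Definition _ := Monoid.isComLaw.Build R 0 Rplus
  (fun x y z => esym (Rplus_assoc x y z)) Rplus_comm Rplus_0_l.

Lemma rsumE n (f : 'I_n -> R) : rsum f = \big[Rplus/0]_(i < n) f i.
Proof.
rewrite /rsum -big_enum /=.
by elim: (enum 'I_n) => [|a s IH]; rewrite ?big_nil // big_cons /= IH.
Qed.

Lemma rsum_ext n (f g : 'I_n -> R) : (forall i, f i = g i) -> rsum f = rsum g.
Proof. by move=> h; rewrite !rsumE; apply: eq_bigr => i _; apply: h. Qed.

Lemma rsum_add n (f g : 'I_n -> R) : rsum (fun i => f i + g i) = rsum f + rsum g.
Proof. by rewrite !rsumE big_split. Qed.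

Lemma rsum_scal n a (f : 'I_n -> R) : rsum (fun i => a * f i) = a * rsum f.
Proof. rewrite !rsumE; elim/big_rec2: _ => [|i y1 y2 _ ->]; ring. Qed.

Lemma rsum_ge0 n (f : 'I_n -> R) : (forall i, 0 <= f i) -> 0 <= rsum f.
Proof.
move=> h; rewrite rsumE; elim/big_rec: _ => [|i y _ hy]; first lra.
by have := h i; lra.
Qed.

Lemma rsum_ge_term n (f : 'I_n -> R) k : (forall i, 0 <= f i) -> f k <= rsum f.
Proof.
move=> h; rewrite rsumE (bigD1 k) //=.
rewrite -{1}(Rplus_0_r (f k)); apply: Rplus_le_compat_l.
by elim/big_rec: _ => [|i y _ hy]; [lra | have := h i; lra].
Qed.

Lemma rsum_swap n m (f : 'I_n -> 'I_m -> R) :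
  rsum (fun i => rsum (fun j => f i j)) = rsum (fun j => rsum (fun i => f i j)).
Proof.
rewrite rsumE (eq_bigr (fun i => \big[Rplus/0]_(j < m) f i j)) => [|i _]; last first.
  by rewrite rsumE.
by rewrite exchange_big rsumE; apply: eq_bigr => j _; rewrite rsumE.
Qed.

Lemma rsum_delta n (k : 'I_n) c (f : 'I_n -> R) :
  rsum (fun i => (if i == k then c else 0) * f i) = c * f k.
Proof. by rewrite rsumE (bigD1 k) //= eqxx big1 => [|i /negbTE ->]; ring. Qed.

Lemma lin_scale n (L : Mat n n -> R) a H :
  linear_on_sym L -> sym H -> L (mscale a H) = a * L H.
Proof.
move=> hL sH.
have -> : mscale a H = madd (mscale a H) (mscale 0 H).
  by apply: mat_ext => i j; rewrite /madd /mscale; ring.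
rewrite hL //; ring.
Qed.

Lemma lin_add n (L : Mat n n -> R) H K :
  linear_on_sym L -> sym H -> sym K -> L (madd H K) = L H + L K.
Proof.
move=> hL sH sK.
have -> : madd H K = madd (mscale 1 H) (mscale 1 K).
  by apply: mat_ext => i j; rewrite /madd /mscale; ring.
rewrite hL //; ring.
Qed.

Lemma sym_scale n a (H : Mat n n) : sym H -> sym (mscale a H).
Proof. by move=> sH i j; rewrite /mscale sH. Qed.

Lemma mnorm_ge0 n m (X : Mat n m) : 0 <= mnorm X.
Proof. by apply: rsum_ge0 => i; apply: rsum_ge0 => j; apply: Rabs_pos. Qed.

Lemma mnorm_scale n m a (X : Mat n m) : mnorm (mscale a X) = Rabs a * mnorm X.
Proof.
rewrite /mnorm -rsum_scal; apply: rsum_ext => i.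
by rewrite -rsum_scal; apply: rsum_ext => j; apply: Rabs_mult.
Qed.

Definition outer n (v w : 'I_n -> R) : Mat n n := fun i j => v i * w j.

Lemma outer_sym n (v : 'I_n -> R) : sym (outer v v).
Proof. by move=> i j; rewrite /outer Rmult_comm. Qed.

Definition qf n (Y : Mat n n) (w : 'I_n -> R) : R :=
  rsum (fun i => rsum (fun j => w i * Y i j * w j)).

Lemma psd_qf n (Y : Mat n n) w : psd Y -> 0 <= qf Y w.
Proof. by case=> _ h; apply: h. Qed.

Lemma qf_shift n (Y : Mat n n) (u : 'I_n -> R) (k : 'I_n) (c : R) : sym Y ->
  qf Y (fun i => u i + (if i == k then c else 0)) =
  qf Y u + 2 * c * rsum (fun j => Y k j * u j) + c * c * Y k k.
Proof.
move=> sY; rewrite /qf.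
have row : forall i,
    rsum (fun j => (u i + (if i == k then c else 0)) * Y i j *
                   (u j + (if j == k then c else 0))) =
    rsum (fun j => u i * Y i j * u j) + (if i == k then c else 0) * rsum (fun j => Y i j * u j)
    + c * (u i * Y i k + (if i == k then c else 0) * Y i k).
  move=> i; rewrite (@rsum_ext _ _ (fun j =>
    (u i * Y i j * u j + (if i == k then c else 0) * (Y i j * u j)) +
    (if j == k then c else 0) * (u i * Y i j + (if i == k then c else 0) * Y i j))).
    by rewrite rsum_add rsum_delta rsum_add rsum_scal.
  by move=> j; ring.
rewrite (rsum_ext row) !rsum_add rsum_delta.
rewrite (@rsum_ext _ (fun i => c * (u i * Y i k + (if i == k then c else 0) * Y i k))
   (fun i => c * (Y k i * u i) + (if i == k then c else 0) * (c * Y i k))); last first.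
  by move=> i; rewrite (sY i k); ring.
rewrite rsum_add rsum_delta rsum_scal; ring.
Qed.

Lemma qf_zero n (Y : Mat n n) : qf Y (fun _ => 0) = 0.
Proof.
have zero : forall p, rsum (fun _ : 'I_p => 0) = 0.
  by move=> p; rewrite rsumE big1.
rewrite /qf (@rsum_ext _ _ (fun _ => 0)) ?zero // => i.
by rewrite (@rsum_ext _ _ (fun _ => 0)) ?zero // => j; ring.
Qed.

Lemma qf_basis n (Y : Mat n n) (k : 'I_n) : sym Y ->
  qf Y (fun i => if i == k then 1 else 0) = Y k k.
Proof.
move=> sY; have := qf_shift (fun _ => 0) k 1 sY.
rewrite qf_zero (@rsum_ext _ _ (fun j => 0 * Y k j)) => [|j]; last ring.
rewrite rsum_scal (_ : (fun i => 0 + _) = (fun i => if i == k then 1 else 0)).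
  by move=> ->; ring.
by apply: functional_extensionality => i; ring.
Qed.

Lemma psd_diag n (Y : Mat n n) k : psd Y -> 0 <= Y k k.
Proof. by move=> hY; rewrite -(qf_basis k hY.1); apply: psd_qf. Qed.

Lemma psd_zero_row n (Y : Mat n n) k : psd Y -> Y k k = 0 -> forall j, Y k j = 0.
Proof.
move=> hY h0 j; case: (Req_dec (Y k j) 0) => // hne.
set t := - (Y j j + 1) / (2 * Y k j).
have := psd_qf (fun i => (if i == j then 1 else 0) + (if i == k then t else 0)) hY.
rewrite qf_shift ?qf_basis ?h0; try exact: hY.1.
rewrite (@rsum_ext _ _ (fun l => (if l == j then 1 else 0) * Y k l)) => [|l]; last ring.
rewrite rsum_delta.
have : t * Y k j = - (Y j j + 1) / 2 by rewrite /t; field.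
nra.
Qed.

Definition schur n (Y : Mat n n) (k : 'I_n) : Mat n n :=
  fun i j => Y i j - Y i k * Y j k / Y k k.

Lemma schur_row n (Y : Mat n n) k j : sym Y -> 0 < Y k k -> schur Y k k j = 0.
Proof. by move=> sY hk; rewrite /schur (sY j k); field; lra. Qed.

Lemma schur_psd n (Y : Mat n n) k : psd Y -> 0 < Y k k -> psd (schur Y k).
Proof.
move=> hY hk; have sY := hY.1.
split=> [i j|w]; first by rewrite /schur (sY i j); field; lra.
change (0 <= qf (schur Y k) w).
set b := rsum (fun j => Y k j * w j).
have -> : qf (schur Y k) w = qf Y w - b * b / Y k k.
  rewrite /qf /schur.
  rewrite (@rsum_ext _ _ (fun i => rsum (fun j => w i * Y i j * w j) +
                                    (- (w i * Y i k / Y k k)) * b)); last first.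
    move=> i; rewrite /b -rsum_scal -rsum_add.
    by apply: rsum_ext => j; rewrite (sY j k); field; lra.
  rewrite rsum_add (@rsum_ext _ (fun i => (- (w i * Y i k / Y k k)) * b)
                                 (fun i => (- (b / Y k k)) * (Y k i * w i))).
    by rewrite rsum_scal -/b; field; lra.
  by move=> i; rewrite (sY i k); field; lra.
have := psd_qf (fun i => w i + (if i == k then - b / Y k k else 0)) hY.
rewrite qf_shift // -/b.
have : 2 * (- b / Y k k) * b + - b / Y k k * (- b / Y k k) * Y k k =
       - (b * b / Y k k) by field; lra.
lra.
Qed.

(* Induction on the number d of rows not yet known to vanish: a zero pivot
   kills its row, a positive pivot is split off as a rank-one term. *)
Lemma psd_cone_of_rank_one n (L : Mat n n -> R) : linear_on_sym L ->
  (forall v, 0 <= L (outer v v)) -> forall Y, psd Y -> 0 <= L Y.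
Proof.
move=> hL hv.
suff gen : forall d k, (k + d = n)%N -> forall Y, psd Y ->
    (forall i j : 'I_n, (i < k)%N -> Y i j = 0) -> 0 <= L Y.
  by move=> Y hY; apply: (gen n 0%N).
elim=> [|d IH] k hkd Y hY hz.
  have -> : Y = mscale 0 Y.
    apply: mat_ext => i j; rewrite /mscale hz; first ring.
    by rewrite -(addn0 k) hkd.
  rewrite lin_scale //; [lra | exact: hY.1].
have kn : (k < n)%N by rewrite -hkd addnS ltnS leq_addr.
set p := Ordinal kn.
have hk1 : (k.+1 + d = n)%N by rewrite addSnnS.
have rows_below : forall Z : Mat n n, Z p =1 (fun _ => 0) ->
    (forall i j : 'I_n, (i < k)%N -> Z i j = 0) ->
    forall i j : 'I_n, (i < k.+1)%N -> Z i j = 0.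
  move=> Z hp hZ i j; rewrite ltnS leq_eqVlt => /orP[/eqP ik|]; last exact: hZ.
  by have -> : i = p by apply: val_inj.
have [pos|zero] := Rle_lt_or_eq_dec _ _ (psd_diag p hY); last first.
  by apply: (IH _ hk1 _ hY); apply: rows_below => // j; apply: psd_zero_row.
set w := fun i => Y i p / Y p p.
have -> : Y = madd (mscale 1 (schur Y p)) (mscale (Y p p) (outer w w)).
  by apply: mat_ext => i j; rewrite /madd /mscale /schur /outer /w; field; lra.
rewrite hL; [|exact: (schur_psd hY pos).1 | exact: outer_sym].
have := hv w.
suff : 0 <= L (schur Y p) by nra.
apply: (IH _ hk1 _ (schur_psd hY pos)); apply: rows_below.
  by move=> j; apply: schur_row => //; exact: hY.1.
by move=> i j hi; rewrite /schur (hz _ _ hi) (hz i p hi) /Rdiv; ring.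
Qed.

Lemma gram_sym n m (U : Mat n m) : sym (gram U).
Proof. by move=> i j; rewrite /gram; apply: rsum_ext => k; ring. Qed.

Lemma gram_psd n m (U : Mat n m) : psd (gram U).
Proof.
split=> [|v]; first exact: gram_sym.
set S := fun k => rsum (fun i => v i * U i k).
suff -> : rsum (fun i => rsum (fun j => v i * gram U i j * v j)) = rsum (fun k => S k * S k).
  by apply: rsum_ge0 => k; apply: Rle_0_sqr.
transitivity (rsum (fun i => rsum (fun k => rsum (fun j => (v i * U i k) * (v j * U j k))))).
  apply: rsum_ext => i; rewrite -rsum_swap; apply: rsum_ext => j.
  transitivity (v i * v j * gram U i j); first ring.
  by rewrite /gram -rsum_scal; apply: rsum_ext => k; ring.
rewrite rsum_swap; apply: rsum_ext => k.
rewrite /S -rsum_scal; apply: rsum_ext => i.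
by rewrite [RHS]Rmult_comm -rsum_scal.
Qed.

Lemma gram_null_perturb n m (U : Mat n m) (z : 'I_m -> R) (v : 'I_n -> R) t :
  (forall i, rsum (fun k => U i k * z k) = 0) ->
  gram (fun i k => U i k + t * (v i * z k)) =
  madd (gram U) (mscale (t * t * rsum (fun k => z k * z k)) (outer v v)).
Proof.
move=> hz; apply: mat_ext => i j; rewrite /madd /mscale /gram /outer.
rewrite (@rsum_ext _ _ (fun k => (U i k * U j k + (t * v j) * (U i k * z k)) +
          ((t * v i) * (U j k * z k) + (t * t * (v i * v j)) * (z k * z k)))).
  by rewrite !rsum_add !rsum_scal hz hz; ring.
by move=> k; ring.
Qed.

Lemma gram_scale n m a (U : Mat n m) : gram (mscale a U) = mscale (a * a) (gram U).
Proof.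
apply: mat_ext => i j; rewrite /gram /mscale -rsum_scal.
by apply: rsum_ext => k; ring.
Qed.

Lemma Rabs_le_bounds x y : Rabs x <= y -> - y <= x <= y.
Proof. by move=> h; have := Rle_abs x; have := Rle_abs (- x); rewrite Rabs_Ropp; lra. Qed.

Definition frechet_at n (F : Mat n n -> R) (X : Mat n n) (A : Mat n n -> R) : Prop :=
  forall eps, 0 < eps -> exists delta, 0 < delta /\
    forall H, sym H -> mnorm H < delta -> Rabs (F (madd X H) - F X - A H) <= eps * mnorm H.

Definition nondescent n (F : Mat n n -> R) (X K : Mat n n) : Prop :=
  forall d, 0 < d -> exists s, 0 < s < d /\ F X <= F (madd X (mscale s K)).

Lemma frechet_along n (F : Mat n n -> R) X A K :
  linear_on_sym A -> frechet_at F X A -> sym K ->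
  forall eps, 0 < eps -> exists s0, 0 < s0 /\ forall s, 0 < s < s0 ->
    Rabs (F (madd X (mscale s K)) - F X - s * A K) <= eps * s.
Proof.
move=> lA hF sK eps eps0.
have nK := mnorm_ge0 K.
have [delta [d0 hd]] := hF (eps / (mnorm K + 1)) ltac:(apply: Rdiv_lt_0_compat; lra).
exists (delta / (mnorm K + 1)); split=> [|s [s0 ss0]].
  by apply: Rdiv_lt_0_compat; lra.
have ns : mnorm (mscale s K) = s * mnorm K by rewrite mnorm_scale Rabs_pos_eq; lra.
have ss0' : s * (mnorm K + 1) < delta.
  have e : delta / (mnorm K + 1) * (mnorm K + 1) = delta by field; lra.
  by rewrite -e; apply: Rmult_lt_compat_r; lra.
have := hd _ (sym_scale s sK); rewrite ns -(lin_scale s lA sK).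
move=> /(_ ltac:(nra)) h; apply: Rle_trans h _.
have e : eps / (mnorm K + 1) * (s * (mnorm K + 1)) = eps * s by field; lra.
rewrite -e; apply: Rmult_le_compat_l; last nra.
by apply: Rlt_le; apply: Rdiv_lt_0_compat; lra.
Qed.

Lemma nondescent_deriv_ge0 n (F : Mat n n -> R) X A K :
  linear_on_sym A -> frechet_at F X A -> sym K -> nondescent F X K -> 0 <= A K.
Proof.
move=> lA hF sK hK; apply: Rle_plus_epsilon => eps eps0.
have [s0 [s00 hs0]] := frechet_along lA hF sK eps0.
have [s [[spos ss0] hs]] := hK s0 s00.
have /Rabs_le_bounds := hs0 s (conj spos ss0).
move=> [_ h]; have hs' : s * 0 <= s * (A K + eps) by lra.
exact: Rmult_le_reg_l spos hs'.
Qed.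

Lemma convex_first_order n (F : Mat n n -> R) X A Y :
  convex_on_sym F -> linear_on_sym A -> frechet_at F X A -> sym X -> sym Y ->
  0 <= A (msub Y X) -> F X <= F Y.
Proof.
move=> hconv lA hF sX sY hD.
have sD : sym (msub Y X) by move=> i j; rewrite /msub sX sY.
suff : A (msub Y X) <= F Y - F X by lra.
apply: Rle_plus_epsilon => eps eps0.
have [s0 [s00 hs0]] := frechet_along lA hF sD eps0.
set t := Rmin (s0 / 2) 1.
have t0 : 0 < t by apply: Rmin_pos; lra.
have t1 : t <= 1 := Rmin_r _ _.
have ts0 : t < s0 by apply: Rle_lt_trans (Rmin_l _ _) _; lra.
have /Rabs_le_bounds [hlow _] := hs0 t (conj t0 ts0).
have hc := hconv Y X sY sX t (conj (Rlt_le _ _ t0) t1).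
have ee : madd (mscale t Y) (mscale (1 - t) X) = madd X (mscale t (msub Y X)).
  by apply: mat_ext => i j; rewrite /madd /msub /mscale; ring.
rewrite ee in hc.
have ht : t * (A (msub Y X) - eps) <= t * (F Y - F X) by lra.
have := Rmult_le_reg_l t _ _ t0 ht; lra.
Qed.

Lemma mul_le_of_le_div t x y : 0 < y -> t <= x / y -> t * y <= x.
Proof.
move=> hy h; have <- : x / y * y = x by field; lra.
exact: Rmult_le_compat_r (Rlt_le _ _ hy) h.
Qed.

Lemma local_min_nondescent n m (F : Mat n n -> R) (U : Mat n m) K
    (V : R -> Mat n m) (phi : R -> R) a b :
  local_min (fun W => F (gram W)) U ->
  (forall t, 0 < t <= 1 ->
     gram (V t) = madd (gram U) (mscale (phi t) K) /\
     0 < phi t <= b * t /\ mnorm (msub (V t) U) <= a * t) ->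
  nondescent F (gram U) K.
Proof.
move=> [delta [d0 hloc]] hV d dpos.
have ha := Rle_abs a; have hb := Rle_abs b.
have pa : 0 < Rabs a + 1 by have := Rabs_pos a; lra.
have pb : 0 < Rabs b + 1 by have := Rabs_pos b; lra.
set t := Rmin 1 (Rmin (delta / (Rabs a + 1)) (d / (Rabs b + 1))).
have t0 : 0 < t by repeat apply: Rmin_pos; try apply: Rdiv_lt_0_compat; lra.
have t1 : t <= 1 := Rmin_l _ _.
have ta : t * (Rabs a + 1) <= delta.
  apply: mul_le_of_le_div pa _; exact: Rle_trans (Rmin_r _ _) (Rmin_l _ _).
have tb : t * (Rabs b + 1) <= d.
  apply: mul_le_of_le_div pb _; exact: Rle_trans (Rmin_r _ _) (Rmin_r _ _).
have [hg [[p0 pt] hn]] := hV t (conj t0 t1).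
exists (phi t); split; first by split=> //; nra.
by rewrite -hg; apply: hloc; nra.
Qed.

(* With U z = 0, z <> 0, the curve U + t v z^T shows that every rank-one
   direction v v^T is a non-descent direction. *)
Lemma rank_deficient_nondescent n m (F : Mat n n -> R) (U : Mat n m) v :
  local_min (fun W => F (gram W)) U -> rank_deficient U ->
  nondescent F (gram U) (outer v v).
Proof.
move=> hloc [z [[k0 hk0] hz]].
set c := rsum (fun k => z k * z k).
have c0 : 0 < c.
  have := @rsum_ge_term _ (fun k => z k * z k) k0 (fun k => Rle_0_sqr (z k)).
  have := Rlt_0_sqr (z k0) hk0; rewrite /Rsqr -/c; lra.
set W : Mat n m := fun i k => v i * z k.
apply: (local_min_nondescent (V := fun t i k => U i k + t * W i k)
                             (phi := fun t => t * t * c) (a := mnorm W) (b := c) hloc).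
move=> t [t0 t1]; split; first exact: gram_null_perturb.
have ct : 0 <= c * t * (1 - t) by apply: Rmult_le_pos; [apply: Rlt_le; nra | lra].
split; first by split; [apply: Rmult_lt_0_compat; nra | nra].
have -> : msub (fun i k => U i k + t * W i k) U = mscale t W.
  by apply: mat_ext => i k; rewrite /msub /mscale; ring.
by rewrite mnorm_scale Rabs_pos_eq; lra.
Qed.

(* The curve (1 - t) U shows that -U U^T is a non-descent direction. *)
Lemma shrink_nondescent n m (F : Mat n n -> R) (U : Mat n m) :
  local_min (fun W => F (gram W)) U -> nondescent F (gram U) (mscale (-1) (gram U)).
Proof.
move=> hloc.
apply: (local_min_nondescent (V := fun t => mscale (1 - t) U)
                             (phi := fun t => t * (2 - t)) (a := mnorm U) (b := 2) hloc).
move=> t [t0 t1]; split.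
  by rewrite gram_scale; apply: mat_ext => i j; rewrite /madd /mscale; ring.
split; first by split; nra.
have -> : msub (mscale (1 - t) U) U = mscale (- t) U.
  by apply: mat_ext => i k; rewrite /msub /mscale; ring.
by rewrite mnorm_scale Rabs_left; lra.
Qed.

Unset Implicit Arguments.
Set Strict Implicit.

Theorem proposition4 (N M : nat) (G : Mat N N -> R)
  (hM : (0 < M)%nat)
  (hconv : convex_on_sym G)
  (hdiff : twice_differentiable_on_sym G)
  (hcomp : compact_level_sets_psd G)
  (U : Mat N M)
  (hloc : local_min (fun V : Mat N M => G (gram V)) U)
  (hrank : rank_deficient U) :
  global_min_psd G (gram U).
Proof.
have sX := gram_sym U.
have [DG [D2G hD]] := hdiff.
have [lin [_ [hfre _]]] := hD _ sX.
have rank_one : forall v, 0 <= DG (gram U) (outer v v).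
  move=> v; apply: (nondescent_deriv_ge0 lin hfre (outer_sym v)).
  exact: rank_deficient_nondescent.
have shrink : 0 <= DG (gram U) (mscale (-1) (gram U)).
  exact: (nondescent_deriv_ge0 lin hfre (sym_scale _ sX) (shrink_nondescent hloc)).
split=> [|Y hY]; first exact: gram_psd.
apply: (convex_first_order hconv lin hfre sX hY.1).
have -> : msub Y (gram U) = madd Y (mscale (-1) (gram U)).
  by apply: mat_ext => i j; rewrite /msub /madd /mscale; ring.
rewrite lin_add //; [|exact: hY.1 | exact: sym_scale].
have := psd_cone_of_rank_one lin rank_one hY; lra.
Qed.
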